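(* Let $A$ be an invertible $n$-by-$n$ doubly nonnegative matrix and let $W=[w_{ij}]$ be its sign change matrix. Then: (1) if $w_{ij}=0$ or $w_{ij}=1$, the critical exponent of the $i,j$-entry of $A$ is $0$; (2) if $w_{ij}=2$, the critical exponent of the $i,j$-entry of $A$ is at most $1$.
   Context: A real matrix is doubly nonnegative if it is symmetric, positive semidefinite, and entry-wise nonnegative. Write $A=UDU^T$ with $U=[u_{ij}]$ real orthogonal and $D=\mathrm{diag}(\lambda_1,\dots,\lambda_n)$, $\lambda_1\ge\cdots\ge\lambda_n>0$; for real $t\ge 0$, $A^t=UD^tU^T$ (so $A^0=I_n$), and $(A^t)_{ij}=\sum_k u_{ik}u_{jk}\lambda_k^t$. The sign change matrix $W$ has $w_{ij}$ equal to the number of sign changes in the coefficient sequence $(u_{i1}u_{j1},\dots,u_{in}u_{jn})$, arranged in decreasing order of the corresponding eigenvalues (zeros ignored). The critical exponent of the $i,j$-entry of $A$ is the least $m\ge 0$ such that $(A^t)_{ij}\ge 0$ for all $t\ge m$. *)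

From HB Require Import structures.
From mathcomp Require Import all_boot all_order all_algebra.
From mathcomp Require Import all_classical all_reals all_analysis.
Set Implicit Arguments. Unset Strict Implicit. Unset Printing Implicit Defensive.
Import Order.TTheory GRing.Theory Num.Theory.
Local Open Scope ring_scope.

Section Defs.
Variable R : realType.

Definition doubly_nonnegative (n : nat) (A : 'M[R]_n) : Prop :=
  [/\ A^T = A,
      (forall x : 'cV[R]_n, 0 <= (x^T *m A *m x) 0 0)
    & (forall i j, 0 <= A i j)].

Definition sign_changes (s : seq R) : nat :=
  let s' := [seq x <- s | x != 0] in
  count (fun p : R * R => p.1 * p.2 < 0) (zip s' (behead s')).

(* Sign change matrix entry w_ij for the eigenvector matrix U
   (columns ordered by decreasing eigenvalue): number of sign changes in
   (u_{i1}u_{j1}, ..., u_{in}u_{jn}). *)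
Definition sign_change_entry (n : nat) (U : 'M[R]_n) (i j : 'I_n) : nat :=
  sign_changes [seq U i k * U j k | k <- enum 'I_n].

(* A^t = U D^t U^T, for real t >= 0, with D = diag(lam), lam > 0. *)
Definition mx_rpow (n : nat) (U : 'M[R]_n) (lam : 'I_n -> R) (t : R) : 'M[R]_n :=
  \matrix_(i, j) \sum_(k < n) U i k * U j k * (lam k `^ t).

Definition entry_nonneg_from (n : nat) (U : 'M[R]_n) (lam : 'I_n -> R)
  (i j : 'I_n) (m : R) : Prop :=
  forall t : R, m <= t -> 0 <= mx_rpow U lam t i j.

Definition is_critical_exponent (n : nat) (U : 'M[R]_n) (lam : 'I_n -> R)
  (i j : 'I_n) (m : R) : Prop :=
  [/\ 0 <= m, entry_nonneg_from U lam i j m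
    & forall m', 0 <= m' -> entry_nonneg_from U lam i j m' -> m <= m'].

End Defs.

From HB Require Import structures.
From mathcomp Require Import all_boot all_order all_algebra.
From mathcomp Require Import all_classical all_reals all_analysis.
From mathcomp Require Import ring lra zify.
Import Order.TTheory GRing.Theory Num.Theory.
Import numFieldNormedType.Exports.
Local Open Scope ring_scope.

Set Implicit Arguments. Unset Strict Implicit. Unset Printing Implicit Defensive.

(* Write c_k = u_ik u_jk and f t = (A^t)_ij = sum_k c_k lam_k^t.  Off the
   diagonal, orthogonality of U gives sum_k c_k = 0, and f N >= 0 for integers N
   since A^N is entrywise nonnegative.  With at most one sign change along the
   decreasing eigenvalues there is a threshold mu with c_k (lam_k - mu) of one
   sign, hence every term of f t = sum_k c_k (lam_k^t - mu^t) has that sign; it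
   is nonnegative, or else f 1 >= 0 forces all terms to vanish.  With two sign
   changes, c_k has one sign for lam_k outside an interval [lo, hi] and the
   opposite sign inside it.  A secant of the concave map y |-> y^r over
   [lo^p, hi^p] lies below the graph on that interval and above it outside,
   so all the terms c_k (a + g lam_k^p - lam_k^(p r)) have the sign of the
   outer coefficients; summing, g f p - f (p r) has that sign for some g > 0.
   For t >= 1 this gives g f t >= f 1 (take p = t, r = 1/t) or f t >= g f N (take
   an integer N > t, p = N, r = t/N).  Continuity of f then makes the least
   admissible exponent exist. *)

Section ConcavePowR.
Variable R : realType.
Implicit Types r p q s t x y A B : R.

Lemma powR_le_affine r y : 0 <= r -> r <= 1 -> 0 < y -> y `^ r <= r * y + (1 - r).
Proof.
move=> r_ge0 r_le1 y_gt0.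
have := concave_ln (Itv01 r_ge0 r_le1) y_gt0 ltr01.
rewrite !convRE /= ln1 mulr0 addr0 mulr1 /unstable.onem => ln_le.
have aff_gt0 : 0 < r * y + (1 - r) by nra.
by rewrite /powR gt_eqF // -[leRHS]lnK ?posrE // ler_expR.
Qed.

Lemma powR_le_tangent r x y : 0 <= r -> r <= 1 -> 0 < x -> 0 < y ->
  y `^ r <= x `^ r + r * x `^ r / x * (y - x).
Proof.
move=> r_ge0 r_le1 x_gt0 y_gt0.
have -> : x `^ r + r * x `^ r / x * (y - x) = x `^ r * (r * (y / x) + (1 - r)).
  by field; rewrite gt_eqF.
have yx_gt0 : 0 < y / x by rewrite divr_gt0.
rewrite -{1}(divfK (lt0r_neq0 x_gt0) y) mulrC powRM ?(ltW x_gt0) ?(ltW yx_gt0) //.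
by rewrite ler_wpM2l ?powR_ge0 ?powR_le_affine.
Qed.

Lemma powR_chord_le r p q s : 0 <= r -> r <= 1 -> 0 < p -> p <= q -> q <= s ->
  (s - q) * p `^ r + (q - p) * s `^ r <= (s - p) * q `^ r.
Proof.
move=> r_ge0 r_le1 p_gt0 pq qs.
have q_gt0 := lt_le_trans p_gt0 pq; have s_gt0 := lt_le_trans q_gt0 qs.
have tan_p := powR_le_tangent r_ge0 r_le1 q_gt0 p_gt0.
have tan_s := powR_le_tangent r_ge0 r_le1 q_gt0 s_gt0.
set K := r * q `^ r / q in tan_p tan_s.
have -> : (s - p) * q `^ r =
    (s - q) * (q `^ r + K * (p - q)) + (q - p) * (q `^ r + K * (s - q)) by ring.
by rewrite lerD // ler_wpM2l // subr_ge0.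
Qed.

Lemma powR_secant r A B : 0 < r -> r <= 1 -> 0 < A -> A <= B ->
  exists al ga, [/\ 0 < ga,
    forall y, A <= y -> y <= B -> al + ga * y <= y `^ r &
    forall y, 0 < y -> y <= A \/ B <= y -> y `^ r <= al + ga * y].
Proof.
move=> r_gt0 r_le1 A_gt0; have r_ge0 := ltW r_gt0.
rewrite le_eqVlt => /orP[/eqP <-|AB].
  (* for a single point, take the tangent line at [A] *)
  exists ((1 - r) * A `^ r), (r * A `^ r / A); split.
  - by rewrite divr_gt0 ?mulr_gt0 ?powR_gt0.
  - move=> y Ay yA; have -> : y = A by apply/le_anti; rewrite Ay yA.
    have -> : (1 - r) * A `^ r + r * A `^ r / A * A = A `^ r by field; rewrite gt_eqF.
    exact: lexx.
  - move=> y y_gt0 _; have -> : (1 - r) * A `^ r + r * A `^ r / A * y =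
        A `^ r + r * A `^ r / A * (y - A) by field; rewrite gt_eqF.
    exact: powR_le_tangent.
have BA_gt0 : 0 < B - A by rewrite subr_gt0.
pose ga := (B `^ r - A `^ r) / (B - A).
have line y : (A `^ r - ga * A + ga * y) * (B - A) = (B - y) * A `^ r + (y - A) * B `^ r.
  by rewrite /ga; field; rewrite gt_eqF.
exists (A `^ r - ga * A), ga; split.
- rewrite divr_gt0 // subr_gt0 (gt0_ltr_powR r_gt0) // nnegrE ltW //.
  exact: lt_trans AB.
- move=> y Ay yB; rewrite -(ler_pM2r BA_gt0) line [leRHS]mulrC.
  exact: powR_chord_le.
- move=> y y_gt0 [yA|By]; rewrite -(ler_pM2r BA_gt0) line.
  + by have := powR_chord_le r_ge0 r_le1 y_gt0 yA (ltW AB); lra.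
  + by have := powR_chord_le r_ge0 r_le1 A_gt0 (ltW AB) By; lra.
Qed.

Lemma powR_le_mono r x y : 0 <= r -> 0 <= x -> x <= y -> x `^ r <= y `^ r.
Proof.
move=> r_ge0 x_ge0 xy; apply: (ge0_ler_powR r_ge0) => //; rewrite nnegrE //.
exact: le_trans xy.
Qed.

Lemma powR_diff_div_ge0 t x y : 0 <= t -> 0 <= x -> 0 <= y ->
  0 <= (x `^ t - y `^ t) / (x - y).
Proof.
move=> t_ge0 x_ge0 y_ge0.
case: (leP x y) => [le_xy|/ltW le_yx].
  by apply: mulr_le0; rewrite ?invr_le0 subr_le0 //; apply: powR_le_mono.
by apply: divr_ge0; rewrite subr_ge0 //; apply: powR_le_mono.
Qed.

End ConcavePowR.

Section Signs.
Variable R : realDomainType.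
Implicit Types (b : bool) (x y c G lo hi : R).

Definition has_sign b x := if b then 0 <= x else x <= 0.

Lemma has_sign0 b : has_sign b (0 : R).
Proof. by case: b; rewrite /has_sign lexx. Qed.

Lemma has_signMr b x y : has_sign b x -> 0 <= y -> has_sign b (x * y).
Proof. by case: b; rewrite /has_sign => hx hy; [exact: mulr_ge0 | exact: mulr_le0_ge0]. Qed.

Lemma has_signNMr b x y : has_sign (~~ b) x -> y <= 0 -> has_sign b (x * y).
Proof. by case: b; rewrite /has_sign => hx hy; [exact: mulr_le0 | exact: mulr_ge0_le0]. Qed.

Lemma has_sign_sum b (I : Type) (r : seq I) (P : pred I) (F : I -> R) :
  (forall i, P i -> has_sign b (F i)) -> has_sign b (\sum_(i <- r | P i) F i).
Proof. by case: b; rewrite /has_sign => hF; [exact: sumr_ge0 | exact: sumr_le0]. Qed.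

Lemma has_sign_mul_gap b c x lo hi G :
  (x < lo \/ hi < x -> has_sign b c) -> (lo < x < hi -> has_sign (~~ b) c) ->
  (lo <= x <= hi -> G <= 0) -> (x <= lo \/ hi <= x -> 0 <= G) ->
  has_sign b (c * G).
Proof.
move=> c_out c_in G_in G_out.
have [x_lo|lo_x] := ltP x lo.
  by apply: has_signMr; [apply: c_out; left | apply: G_out; left; apply: ltW].
have [hi_x|x_hi] := ltP hi x.
  by apply: has_signMr; [apply: c_out; right | apply: G_out; right; apply: ltW].
have G_le0 : G <= 0 by apply: G_in; rewrite lo_x.
have [x_end|x_mid] := boolP ((x == lo) || (x == hi)).
  have -> : G = 0.
    by apply/le_anti; rewrite G_le0 G_out //; case/orP: x_end => /eqP ->; [left|right].
  by rewrite mulr0 has_sign0.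
apply: has_signNMr G_le0; apply: c_in.
by move: x_mid; rewrite negb_or !lt_neqAle lo_x x_hi andbT eq_sym => /andP[-> ->].
Qed.

End Signs.

Lemma has_sign_powR_diff (R : realType) b (x y t d : R) : 0 <= t -> 0 < x -> 0 < y ->
  has_sign b (d * (x - y)) -> has_sign b (d * (x `^ t - y `^ t)).
Proof.
move=> t_ge0 x_gt0 y_gt0 sgn; have [->|x_neq_y] := eqVneq x y.
  by rewrite !subrr mulr0 has_sign0.
have -> : d * (x `^ t - y `^ t) = d * (x - y) * ((x `^ t - y `^ t) / (x - y)).
  by field; rewrite subr_eq0.
by apply: has_signMr sgn _; apply: powR_diff_div_ge0 => //; apply: ltW.
Qed.

Section SignBlocks.
Variable R : realType.
Implicit Types (b : bool) (x : R) (s : seq R).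

Fixpoint alt_sign_blocks b m s : Prop :=
  if m is m'.+1 then
    exists s1 s2, [/\ s = s1 ++ s2, all (has_sign b) s1 & alt_sign_blocks (~~ b) m' s2]
  else all (has_sign b) s.

Lemma alt_sign_blocks_cons b m x s :
  has_sign b x -> alt_sign_blocks b m s -> alt_sign_blocks b m (x :: s).
Proof.
case: m => [|m] /= hx; first by rewrite hx.
by move=> [s1 [s2 [-> h1 h2]]]; exists (x :: s1), s2; rewrite /= hx h1.
Qed.

Lemma alt_sign_blocks_all b m s : all (has_sign b) s -> alt_sign_blocks b m s.
Proof.
elim: m b s => [|m IH] b s //= hs.
by exists s, [::]; split; rewrite ?cats0 //; apply: IH.
Qed.

Lemma sign_changes_cons0 s : sign_changes (0 :: s) = sign_changes s.
Proof. by rewrite /sign_changes /= eqxx. Qed.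

Lemma sign_changes_cons x s : x != 0 -> sign_changes (x :: s) =
  if [seq y <- s | y != 0] is y :: _ then ((x * y < 0)%R + sign_changes s)%N else 0%N.
Proof. by move=> x_neq0; rewrite /sign_changes /= x_neq0; case: [seq y <- s | y != 0]. Qed.

Lemma alt_sign_blocks_sign_changes s m b : (sign_changes s <= m)%N ->
  has_sign b (head 0 [seq y <- s | y != 0]) -> alt_sign_blocks b m s.
Proof.
elim: s m b => [|x s IH] m b; first by move=> _ _; apply: alt_sign_blocks_all.
have [->|x_neq0] := eqVneq x 0.
  rewrite sign_changes_cons0 /= eqxx => hm hb.
  by apply: alt_sign_blocks_cons; [apply: has_sign0 | apply: IH].
rewrite sign_changes_cons //= x_neq0 /= => hm hb.
case E: [seq y <- s | y != 0] hm => [|y fs] hm.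
  by apply: alt_sign_blocks_cons hb _; apply: IH; rewrite ?E ?has_sign0 // /sign_changes E.
have y_neq0 : y != 0.
  have : y \in [seq y <- s | y != 0] by rewrite E mem_head.
  by rewrite mem_filter => /andP[].
move: hm; case: ltP => [xy_lt0|xy_ge0] hm.
  case: m hm => // m hm.
  exists [:: x], s; split; rewrite /= ?hb //.
  by apply: IH; rewrite ?E //=; move: hb; rewrite /has_sign; case: b => /=; nra.
apply: alt_sign_blocks_cons => //; apply: IH; rewrite ?E //=.
by move: hb; rewrite /has_sign; case: b => /=; nra.
Qed.

Lemma alt_sign_blocks1_nth b s : alt_sign_blocks b 1 s ->
  exists p, forall k, (k < size s)%N ->
    ((k < p)%N -> has_sign b (nth 0 s k)) /\ ((p <= k)%N -> has_sign (~~ b) (nth 0 s k)).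
Proof.
move=> [s1 [s2 [-> h1 /= h2]]]; exists (size s1) => k ks; rewrite nth_cat.
split=> hk; first by rewrite hk; apply: (all_nthP 0 h1).
rewrite ltnNge hk /=; apply: (all_nthP 0 h2).
by rewrite size_cat in ks; rewrite ltn_subLR.
Qed.

Lemma alt_sign_blocks2_nth b s : alt_sign_blocks b 2 s ->
  exists p q, forall k, (k < size s)%N ->
    [/\ (k < p)%N -> has_sign b (nth 0 s k),
        (p <= k < q)%N -> has_sign (~~ b) (nth 0 s k)
      & (q <= k)%N -> has_sign b (nth 0 s k)].
Proof.
move=> [s1 [s2 [-> h1 [s3 [s4 [-> h3 /= h4]]]]]]; rewrite negbK in h4.
exists (size s1), (size s1 + size s3)%N => k ks; rewrite !size_cat in ks.
rewrite nth_cat; split=> hk.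
- by rewrite hk; apply: (all_nthP 0 h1).
- have [hk1 hk2] := andP hk; rewrite ltnNge hk1 /= nth_cat ltn_subLR // hk2.
  by apply: (all_nthP 0 h3); rewrite ltn_subLR.
- have hk1 : (size s1 <= k)%N by apply: leq_trans hk; exact: leq_addr.
  rewrite ltnNge hk1 /= nth_cat ltn_subLR // ltnNge hk /=.
  by apply: (all_nthP 0 h4); rewrite !ltn_subLR // ?addnA // leq_subRL.
Qed.

End SignBlocks.

Section EigenvalueSignPattern.
Variables (R : realType) (n : nat) (c lam : 'I_n -> R).
Hypothesis n_gt0 : (0 < n)%N.
Hypothesis lam_gt0 : forall k, 0 < lam k.
Hypothesis lam_noninc : forall k l : 'I_n, (k <= l)%N -> lam l <= lam k.

Let coefs := [seq c k | k <- enum 'I_n].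

Lemma nth_coefs (k : 'I_n) : nth 0 coefs k = c k.
Proof. by rewrite (nth_map k) ?size_enum_ord // nth_ord_enum. Qed.

Lemma coefs_alt_sign_blocks m : (sign_changes coefs <= m)%N ->
  exists b, alt_sign_blocks b m coefs.
Proof.
move=> sc; exists (0 <= head 0 [seq y <- coefs | y != 0]).
apply: alt_sign_blocks_sign_changes sc _; rewrite /has_sign.
by case: ifP => // /negbT; rewrite -ltNge => /ltW.
Qed.

Lemma lam_lt_index k l : lam k < lam l -> (l < k)%N.
Proof.
by move=> lt_kl; rewrite ltnNge; apply: contraTN lt_kl => /lam_noninc; rewrite -leNgt.
Qed.

Lemma sign_changes_le1_threshold : (sign_changes coefs <= 1)%N ->
  exists b mu, 0 < mu /\ forall k, has_sign b (c k * (lam k - mu)).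
Proof.
move=> /coefs_alt_sign_blocks[b /alt_sign_blocks1_nth[p hp]].
have {}hp (k : 'I_n) :
    ((k < p)%N -> has_sign b (c k)) /\ ((p <= k)%N -> has_sign (~~ b) (c k)).
  by rewrite -nth_coefs; apply: hp; rewrite size_map size_enum_ord.
have ip : (minn p n.-1 < n)%N by lia.
exists b, (lam (Ordinal ip)); split => // k; have := ltn_ord k.
case: (ltnP k p) => [kp|pk] kn.
  by apply: has_signMr; [exact: (hp k).1 | rewrite subr_ge0; apply: lam_noninc => /=; lia].
by apply: has_signNMr; [exact: (hp k).2 | rewrite subr_le0; apply: lam_noninc => /=; lia].
Qed.

Lemma sign_changes_le2_gap : (sign_changes coefs <= 2)%N ->
  exists b lo hi, [/\ 0 < lo, lo <= hi,
    forall k, lam k < lo \/ hi < lam k -> has_sign b (c k) &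
    forall k, lo < lam k < hi -> has_sign (~~ b) (c k)].
Proof.
move=> /coefs_alt_sign_blocks[b /alt_sign_blocks2_nth[p [q hpq]]].
have {}hpq (k : 'I_n) : [/\ (k < p)%N -> has_sign b (c k),
    (p <= k < q)%N -> has_sign (~~ b) (c k) & (q <= k)%N -> has_sign b (c k)].
  by rewrite -nth_coefs; apply: hpq; rewrite size_map size_enum_ord.
(* [lo] and [hi] sit at the two ends of the middle block [p <= k < q]; the
   clamping keeps both indices in range when that block is empty. *)
have ilo : (minn (maxn p (minn q n).-1) n.-1 < n)%N by lia.
have ihi : (minn p n.-1 < n)%N by lia.
exists b, (lam (Ordinal ilo)), (lam (Ordinal ihi)); split => // [|k|k].
- by apply: lam_noninc => /=; lia.
- have := ltn_ord k; case: (hpq k) => lo_sign _ hi_sign kn.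
  by case=> /lam_lt_index /= ?; [apply: hi_sign | apply: lo_sign]; lia.
- have := ltn_ord k; case: (hpq k) => _ mid_sign _ kn.
  by case/andP=> /lam_lt_index /= ? /lam_lt_index /= ?; apply: mid_sign; lia.
Qed.

Lemma gap_secant_sign b lo hi r p : 0 < r -> r <= 1 -> 0 < p -> 0 < lo -> lo <= hi ->
  (forall k, lam k < lo \/ hi < lam k -> has_sign b (c k)) ->
  (forall k, lo < lam k < hi -> has_sign (~~ b) (c k)) ->
  exists al ga, 0 < ga /\
    forall k, has_sign b (c k * (al + ga * lam k `^ p - lam k `^ (p * r))).
Proof.
move=> r_gt0 r_le1 p_gt0 lo_gt0 lo_hi c_out c_in.
have powR_mono (x y : R) := @powR_le_mono R p x y (ltW p_gt0).
have [al [ga [ga_gt0 sec_in sec_out]]] :=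
  powR_secant r_gt0 r_le1 (powR_gt0 p lo_gt0) (powR_mono _ _ (ltW lo_gt0) lo_hi).
exists al, ga; split => // k; have lam_ge0 := ltW (lam_gt0 k).
apply: has_sign_mul_gap (c_out k) (c_in k) _ _; rewrite powRrM.
- by case/andP=> lo_k k_hi; rewrite subr_le0 sec_in // powR_mono // ltW.
- move=> out; rewrite subr_ge0 sec_out ?powR_gt0 //.
  by case: out => ?; [left | right]; apply: powR_mono => //; apply: le_trans lo_hi; apply: ltW.
Qed.

Hypothesis sum_c0 : \sum_k c k = 0.
Hypothesis sum_pow_ge0 : forall N : nat, 0 <= \sum_k c k * lam k ^+ N.

Let f t := \sum_k c k * lam k `^ t.

Lemma sum_powR_natr_ge0 (N : nat) : 0 <= f N%:R.
Proof. by rewrite /f; under eq_bigr do rewrite powR_mulrn ?ltW //; apply: sum_pow_ge0. Qed.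

Lemma sum_powR_ge0_sign_changes_le1 :
  (sign_changes coefs <= 1)%N -> forall t, 0 <= t -> 0 <= f t.
Proof.
move=> /sign_changes_le1_threshold[b [mu [mu_gt0 sgn]]] t t_ge0.
have f_shift s : f s = \sum_k c k * (lam k `^ s - mu `^ s).
  rewrite /f; under [RHS]eq_bigr do rewrite mulrBr.
  by rewrite sumrB -mulr_suml sum_c0 mul0r subr0.
have term_sign s k : 0 <= s -> has_sign b (c k * (lam k `^ s - mu `^ s)).
  by move=> s_ge0; apply: has_sign_powR_diff.
rewrite f_shift; case: b sgn term_sign => sgn term_sign.
  by apply: sumr_ge0 => k _; apply: term_sign.
(* all terms are nonpositive while f 1 >= 0, so they all vanish *)
have sum1_eq0 : \sum_k - (c k * (lam k `^ 1 - mu `^ 1)) = 0.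
  apply/le_anti; rewrite sumrN oppr_le0 oppr_ge0 -f_shift (sum_powR_natr_ge0 1) /= f_shift.
  by apply: sumr_le0 => k _; apply: term_sign.
have term1_eq0 k : c k * (lam k - mu) = 0.
  rewrite -(powRr1 (ltW (lam_gt0 k))) -(powRr1 (ltW mu_gt0)).
  apply/eqP; rewrite -oppr_eq0; apply/eqP; apply: (psumr_eq0P _ sum1_eq0) => // l _.
  by rewrite oppr_ge0; apply: term_sign.
rewrite big1 // => k _; have /eqP := term1_eq0 k.
by rewrite mulf_eq0 subr_eq0 => /orP[/eqP-> | /eqP->]; rewrite ?mul0r ?subrr ?mulr0.
Qed.

Lemma sum_powR_ge0_sign_changes_le2 :
  (sign_changes coefs <= 2)%N -> forall t, 1 <= t -> 0 <= f t.
Proof.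
move=> /sign_changes_le2_gap[b [lo [hi [lo_gt0 lo_hi c_out c_in]]]] t t_ge1.
have t_gt0 : 0 < t := lt_le_trans ltr01 t_ge1.
have secant p r : 0 < r -> r <= 1 -> 0 < p ->
    exists2 ga, 0 < ga & has_sign b (ga * f p - f (p * r)).
  move=> r_gt0 r_le1 p_gt0.
  have [al [ga [ga_gt0 sgn]]] := gap_secant_sign r_gt0 r_le1 p_gt0 lo_gt0 lo_hi c_out c_in.
  exists ga => //.
  rewrite (_ : _ - _ = \sum_k c k * (al + ga * lam k `^ p - lam k `^ (p * r))).
    by apply: has_sign_sum => k _; apply: sgn.
  rewrite (eq_bigr (fun k => al * c k + (ga * (c k * lam k `^ p) - c k * lam k `^ (p * r)))).
    by rewrite big_split /= -mulr_sumr sum_c0 mulr0 add0r sumrB -mulr_sumr.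
  by move=> k _; ring.
case: b {c_out c_in} secant => secant.
  have tinv_gt0 : 0 < t^-1 by rewrite invr_gt0.
  have tinv_le1 : t^-1 <= 1 by rewrite invf_le1.
  have [ga ga_gt0] := secant t t^-1 tinv_gt0 tinv_le1 t_gt0.
  rewrite mulfV ?gt_eqF // /has_sign subr_ge0 => f1_le.
  by rewrite -(pmulr_rge0 _ ga_gt0); apply: le_trans (sum_powR_natr_ge0 1) f1_le.
pose N := (Num.truncn t).+1.
have N_gt0 : 0 < N%:R :> R by rewrite ltr0n.
have r_le1 : t / N%:R <= 1 by rewrite ler_pdivrMr // mul1r ltW // truncnS_gt.
have [ga ga_gt0] := secant N%:R (t / N%:R) (divr_gt0 t_gt0 N_gt0) r_le1 N_gt0.
rewrite [_ * (t / _)]mulrC divfK ?gt_eqF // /has_sign subr_le0; apply: le_trans.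
by rewrite mulr_ge0 ?sum_powR_natr_ge0 ?ltW.
Qed.

End EigenvalueSignPattern.

Lemma exp_mx_ge0 (R : numDomainType) n (A : 'M[R]_n) :
  (forall i j, 0 <= A i j) -> forall N i j, 0 <= (A ^+ N) i j.
Proof.
move=> A_ge0; elim=> [|N IH] i j; first by rewrite expr0 -idmxE mxE ler0n.
by rewrite exprS -mulmxE mxE; apply: sumr_ge0 => k _; apply: mulr_ge0.
Qed.

Section OrthogonalSpectral.
Variables (R : comPzRingType) (n : nat) (U : 'M[R]_n).
Hypothesis U_orth : U *m U^T = 1%:M.

Lemma spectral_mx_entry (d : 'I_n -> R) i j :
  (U *m diag_mx (\row_k d k) *m U^T) i j = \sum_k U i k * U j k * d k.
Proof. by rewrite mul_mx_diag !mxE; apply: eq_bigr => k _; rewrite !mxE mulrAC. Qed.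

Lemma orthomx_row_dot i j : \sum_k U i k * U j k = (i == j)%:R.
Proof.
have := congr1 (fun M : 'M[R]_n => M i j) U_orth; rewrite !mxE => <-.
by apply: eq_bigr => k _; rewrite mxE.
Qed.

Lemma spectral_mx_exp (d : 'I_n -> R) N :
  (U *m diag_mx (\row_k d k) *m U^T) ^+ N = U *m diag_mx (\row_k d k ^+ N) *m U^T.
Proof.
elim: N => [|N IH].
  rewrite expr0 -idmxE -U_orth (_ : diag_mx _ = 1%:M) ?mulmx1 //.
  by apply/matrixP => a b; rewrite !mxE expr0.
rewrite exprS IH -mulmxE !mulmxA -[_ *m U^T *m U]mulmxA (mulmx1C U_orth) mulmx1.
rewrite -[U *m _ *m diag_mx _]mulmxA mulmx_diag.
by congr (_ *m diag_mx _ *m _); apply/rowP => k; rewrite !mxE exprS.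
Qed.

End OrthogonalSpectral.

Section CriticalExponent.
Variable R : realType.

Lemma least_nonneg_threshold (f : R -> R) (m0 : R) :
  continuous f -> 0 <= m0 -> (forall t, m0 <= t -> 0 <= f t) ->
  exists2 m, m <= m0 & [/\ 0 <= m, forall t, m <= t -> 0 <= f t
    & forall m', 0 <= m' -> (forall t, m' <= t -> 0 <= f t) -> m <= m'].
Proof.
move=> f_cont m0_ge0 f_ge0.
pose S := [set m | 0 <= m /\ forall t, m <= t -> 0 <= f t]%classic.
have S_lb : lbound S 0 by move=> x [].
have S_inf : has_inf S by split; [exists m0 | exists 0].
have f_ge0_gt t : inf S < t -> 0 <= f t.
  rewrite -subr_gt0 => St; have [m [_ f_ge0_m] mt] := inf_adherent St S_inf.
  by apply: f_ge0_m; apply: ltW; rewrite addrC subrK in mt.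
have f_ge0_inf : 0 <= f (inf S).
  rewrite leNgt; apply/negP => /(cvgr_lt _ (f_cont (inf S))) [e /= e_gt0 f_lt0].
  have : 0 <= f (inf S + e / 2) by apply: f_ge0_gt; rewrite ltrDl divr_gt0.
  rewrite leNgt => /negP; apply; apply: f_lt0.
  rewrite /ball /= opprD addrA subrr sub0r normrN gtr0_norm ?divr_gt0 //.
  by rewrite ltr_pdivrMr // ltr_pMr // ltr1n.
exists (inf S); first by apply: (ge_inf (ex_intro _ 0 S_lb)).
split; first by apply: lb_le_inf => //; exists m0.
  by move=> t; rewrite le_eqVlt => /orP[/eqP <- | /f_ge0_gt].
by move=> m' m'_ge0 f_ge0'; apply: (ge_inf (ex_intro _ 0 S_lb)).
Qed.

Lemma continuous_mx_rpow_entry n (U : 'M[R]_n) (lam : 'I_n -> R) (i j : 'I_n) :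
  (forall k, 0 < lam k) -> continuous (fun t => mx_rpow U lam t i j).
Proof.
move=> lam_gt0; have -> : (fun t => mx_rpow U lam t i j) =
    (fun t => \sum_k U i k * U j k * expR (t * ln (lam k))).
  by apply/funext => t; rewrite mxE; apply: eq_bigr => k _; rewrite /powR gt_eqF.
apply: continuous_big => [|k _]; first exact: add_continuous.
move=> t; apply: cvgM; first exact: cvg_cst.
apply: continuous_comp; last exact: continuous_expR.
by apply: cvgM; [exact: cvg_id | exact: cvg_cst].
Qed.

Lemma critical_exponent_le n (U : 'M[R]_n) (lam : 'I_n -> R) i j m0 :
  (forall k, 0 < lam k) -> 0 <= m0 -> (forall t, m0 <= t -> 0 <= mx_rpow U lam t i j) ->
  exists m, is_critical_exponent U lam i j m /\ m <= m0.
Proof.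
move=> lam_gt0 m0_ge0 entry_ge0.
have [m m_le crit] := least_nonneg_threshold (@continuous_mx_rpow_entry n U lam i j lam_gt0)
  m0_ge0 entry_ge0.
by exists m.
Qed.

Lemma is_critical_exponent0 n (U : 'M[R]_n) (lam : 'I_n -> R) i j :
  (forall t, 0 <= t -> 0 <= mx_rpow U lam t i j) -> is_critical_exponent U lam i j 0.
Proof. by move=> entry_ge0; split. Qed.

End CriticalExponent.

Theorem lemma4p2 (R : realType) (n : nat) (A : 'M[R]_n)
  (U : 'M[R]_n) (lam : 'I_n -> R) (i j : 'I_n) :
  doubly_nonnegative A ->
  A \in unitmx ->
  U *m U^T = 1%:M ->
  (forall k, 0 < lam k) ->
  (forall k l : 'I_n, (k <= l)%N -> lam l <= lam k) ->
  A = U *m diag_mx (\row_k lam k) *m U^T ->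
  ((sign_change_entry U i j = 0%N \/ sign_change_entry U i j = 1%N) ->
     is_critical_exponent U lam i j 0) /\
  (sign_change_entry U i j = 2%N ->
     exists m : R, is_critical_exponent U lam i j m /\ m <= 1).
Proof.
move=> [_ _ A_ge0] _ U_orth lam_gt0 lam_noninc A_def.
have [<-|neq_ij] := eqVneq i j.
  have entry_ge0 t : 0 <= mx_rpow U lam t i i.
    by rewrite mxE; apply: sumr_ge0 => k _; rewrite mulr_ge0 ?powR_ge0 // -expr2 sqr_ge0.
  split=> _; first by apply: is_critical_exponent0 => t _.
  by apply: critical_exponent_le ler01 _ => // t _.
have n_gt0 : (0 < n)%N := leq_ltn_trans (leq0n i) (ltn_ord i).
have sum_c0 : \sum_k U i k * U j k = 0 by rewrite orthomx_row_dot // (negbTE neq_ij).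
have pow_ge0 N : 0 <= \sum_k U i k * U j k * lam k ^+ N.
  by rewrite -spectral_mx_entry -spectral_mx_exp // -A_def exp_mx_ge0.
split=> [w_le1|w_eq2].
  apply: is_critical_exponent0 => t t_ge0; rewrite mxE.
  apply: (sum_powR_ge0_sign_changes_le1 (c := fun k => U i k * U j k)) => //.
  by change (sign_change_entry U i j <= 1)%N; case: w_le1 => ->.
apply: critical_exponent_le ler01 _ => // t t_ge1; rewrite mxE.
apply: (sum_powR_ge0_sign_changes_le2 (c := fun k => U i k * U j k)) => //.
by change (sign_change_entry U i j <= 2)%N; rewrite w_eq2.
Qed.
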